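(* Assume the Standing setup and the Time series setup, suppose that $R(z)$ is analytic on $\mathcal V_\epsilon\cup\mathcal W_\theta$ for some $\epsilon>0$ and $\theta>0$, that $R$ has a pole of order $2$ at $z=1$ (i.e. $T_{-2}\ne0$ and $T_{-k}=0$ for $k\ge3$), and that $x(-1)=c=T_{-2}d$ for some $d\in Y$. Then for every integer $t\ge0$ $$x(t)=T_{-2}\nabla^{-2}g_+(t)-T_{-1}\nabla^{-1}g_+(t)+T_{-2}d+(t+1)T_{-2}C_0T_{-2}d+\sum_{s=0}^tV_s\,g(t-s),$$ where $\nabla^{-1}g_+(t)=\sum_{s=0}^tg(t-s)$ and $\nabla^{-2}g_+(t)=\sum_{s=0}^t(s+1)g(t-s)$. Moreover $T_{-2}(Y)\subseteq T_{-1}(Y)$, and for every $f\in X^*$ with $f(u)=0$ for all $u\in T_{-2}(Y)$ one has $f(x(t))=-f\big(T_{-1}\sum_{s=0}^tg(t-s)\big)+\sum_{s=0}^tf\big(V_sg(t-s)\big)$ for all $t\ge0$.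
   Context: Standing setup. Let $X,Y$ be complex Banach spaces, let $\mathcal B(X,Y)$ denote the bounded linear operators from $X$ to $Y$ ($\mathcal B(X)=\mathcal B(X,X)$), and let $I_X$ be the identity on $X$. Let $A_0,A_1\in\mathcal B(X,Y)$, let $A(z)=A_0+A_1z$ ($z\in\mathbb C$), and set $C_0=A_0+A_1$, $C_1=A_1$, so that $A(z)=C_0+C_1(z-1)$. Let $R(z)=A(z)^{-1}\in\mathcal B(Y,X)$ where this inverse exists. For $\epsilon>0$ let $\mathcal V_\epsilon=\{z\in\mathbb C:|z|<1+\epsilon,\ z\ne1\}$, and for $\theta>0$ let $\mathcal W_\theta=\{z\in\mathbb C:0<|z-1|<1+\theta\}$. If $R$ is analytic on $\mathcal V_\epsilon$ then it has a Laurent expansion $R(z)=\sum_{j\in\mathbb Z}T_j(z-1)^j$ on $0<|z-1|<\epsilon$ with $T_j\in\mathcal B(Y,X)$, and (known facts) $T_{-k}=(-1)^{k-1}(T_{-1}C_0)^{k-1}T_{-1}$ for $k\ge1$, $T_\ell=(-1)^\ell(T_0C_1)^\ell T_0$ for $\ell\ge0$, $\|(T_{-1}C_0)^k\|^{1/k}\to0$, $T_{-1}C_1+T_0C_0=I_X$, $C_1T_{-1}+C_0T_0=I_Y$, $T_{-1}C_iT_0=0$ and $T_0C_iT_{-1}=0$ for $i=0,1$; moreover $P=T_{-1}C_1$ and $P^c=I_X-P=T_0C_0$ are complementary projections on $X$ and $Q=C_1T_{-1}$, $Q^c=I_Y-Q=C_0T_0$ are complementary projections on $Y$. The singular part $R_{\rm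 sin}(z)=\sum_{k\ge1}T_{-k}(z-1)^{-k}$ converges for all $z\ne1$ and the regular part is $R_{\rm reg}(z)=\sum_{\ell\ge0}T_\ell(z-1)^\ell$. Define, for integers $s\ge0$, $U_s=-(I_X-T_{-1}C_0)^{-s-1}T_{-1}$ (these are the Maclaurin coefficients of $R_{\rm sin}$) and, whenever $I_X-T_0C_1$ is invertible, $V_s=(-1)^s(I_X-T_0C_1)^{-s-1}(T_0C_1)^sT_0$. Time series setup. Let $(\Omega,\Sigma,\mu)$ be a probability space and $\{n(t)\}_{t\in\mathbb Z}$ a sequence of i.i.d. $X$-valued (Bochner measurable) random variables with $\mathbb E\|n(t)\|^2<\infty$ and $\mathbb E[n(t)]=0$. Let $F_0,F_1\in\mathcal B(X,Y)$ and $g(t)=F_0n(t)+F_1n(t-1)$ for $t\in\mathbb Z$. The $X$-valued random sequence $\{x(t)\}_{t\ge-1}$ satisfies $x(-1)=c$ and $A_0x(t)+A_1x(t-1)=g(t)$ for every integer $t\ge0$. Let $g_+(t)=g(t)$ for $t\ge0$ and $g_+(t)=0$ for $t<0$. For integers $t\ge0$, $k\ge1$, $\ell\ge0$ write $\nabla^{-k}g_+(t)=\sum_{s=0}^t\binom{s+k-1}{s}g(t-s)$, $\nabla^\ell g_+(t)=\sum_{s=0}^{\min\{\ell,t\}}\binom{\ell}{s}(-1)^sg(t-s)$ and $\nabla^\ell g(t)=\sum_{s=0}^{\ell}\binom{\ell}{s}(-1)^sg(t-s)$. *)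

From HB Require Import structures.
From mathcomp Require Import all_boot all_order all_algebra.
From mathcomp Require Import complex.
From mathcomp Require Import all_classical all_reals all_analysis.
Set Implicit Arguments. Unset Strict Implicit. Unset Printing Implicit Defensive.
Import Order.TTheory GRing.Theory Num.Theory.
Local Open Scope classical_set_scope.
Local Open Scope ring_scope.
Local Open Scope complex_scope.

Section Operators.
Context {R : realType}.
Local Notation C := R[i].

Definition is_linear_op {U V : normedModType C} (f : U -> V) :=
  forall (a : C) (u v : U), f (a *: u + v) = a *: f u + f v.

Definition bounded_op {U V : normedModType C} (f : U -> V) :=
  is_linear_op f /\ exists M : C, forall u, `|f u| <= M * `|u|.

(* convergence of a sequence of operators in the operator norm:
   || u_N - L || -> 0, written out as uniform convergence on the unit ball *)
Definition op_cvg {U V : normedModType C} (u : nat -> U -> V) (L : U -> V) :=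
  forall e : C, 0 < e -> exists N : nat, forall m : nat, (N <= m)%N ->
    forall v : U, `|u m v - L v| <= e * `|v|.

Definition analytic_on {U V : normedModType C} (D : set C) (F : C -> U -> V) :=
  forall z0, D z0 -> exists r : C, 0 < r /\
    exists a : nat -> U -> V, (forall k, bounded_op (a k)) /\
      forall z, `|z - z0| < r ->
        D z /\ op_cvg (fun N v => \sum_(k < N) (z - z0) ^+ k *: a k v) (F z).

Definition laurent_at1 {U V : normedModType C} (T : int -> U -> V) (F : C -> U -> V)
  (eps : R) :=
  forall z : C, 0 < `|z - 1| < eps%:C ->
    exists Sg Rg : U -> V,
      op_cvg (fun N v => \sum_(k < N) (z - 1) ^- k.+1 *: T (- (k.+1)%:Z)%R v) Sg /\
      op_cvg (fun N v => \sum_(l < N) (z - 1) ^+ l *: T (l%:Z) v) Rg /\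
      forall v, F z v = Sg v + Rg v.

Definition VW (eps theta : R) : set C :=
  [set z | (`|z| < (1 + eps)%:C /\ z != 1) \/ (0 < `|z - 1| < (1 + theta)%:C)].

(* the (two-sided, bounded) inverse of an operator, chosen classically when
   it exists (junk value 0 otherwise) *)
Definition op_inv {U : normedModType C} (f : U -> U) : U -> U :=
  match pselect (exists g : U -> U, bounded_op g /\ cancel f g /\ cancel g f) with
  | left H => projT1 (cid H)
  | right _ => fun _ => 0
  end.

(* V_s = (-1)^s (I - T_0 C_1)^{-s-1} (T_0 C_1)^s T_0, with C_1 = A_1 *)
Definition Vop {U V : normedModType C} (T : int -> V -> U) (A1 : U -> V) (s : nat)
  : V -> U :=
  fun y => (-1) ^+ s *:
    iter s.+1 (op_inv (fun u => u - T 0%:Z (A1 u)))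
      (iter s (fun u => T 0%:Z (A1 u)) (T 0%:Z y)).

Definition nabla_inv {V : normedModType C} (k : nat) (g : int -> V) (t : nat) : V :=
  \sum_(s < t.+1) ('C(s + k - 1, s))%:R *: g (t%:Z - s%:Z)%R.

End Operators.

Section RandomVariables.
Context {R : realType}.
Local Notation C := R[i].
Context {d : measure_display} {Omega : measurableType d}.

Definition borel_sets (V : normedModType C) : set (set V) :=
  <<s [set A : set V | open A] >>.

Definition simple_fun {V : normedModType C} (f : Omega -> V) :=
  finite_set (range f) /\ forall v : V, measurable (f @^-1` [set v]).

Definition bochner_measurable {V : normedModType C} (f : Omega -> V) :=
  exists s : nat -> Omega -> V, (forall k, simple_fun (s k)) /\
    forall w, (fun k => s k w) @ \oo --> f w.

Definition simple_integral (P : probability Omega R) {V : normedModType C}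
  (s : Omega -> V) : V :=
  (\sum_(v \in range s) (fine (P (s @^-1` [set v])))%:C *: v)%R.

Definition bochner_integral_is (P : probability Omega R) {V : normedModType C}
  (f : Omega -> V) (m : V) :=
  exists s : nat -> Omega -> V, (forall k, simple_fun (s k)) /\
    (fun k => (\int[P]_w (complex.Re `|s k w - f w|)%:E)%E) @ \oo --> 0%E /\
    (fun k => simple_integral P (s k)) @ \oo --> m.

Definition finite_second_moment (P : probability Omega R) {V : normedModType C}
  (f : Omega -> V) :=
  (\int[P]_w ((complex.Re `|f w|) ^+ 2)%:E < +oo)%E.

Definition iid_seq (P : probability Omega R) {V : normedModType C}
  (n : int -> Omega -> V) :=
  (forall (J : seq int) (B : int -> set V), uniq J ->
     (forall j, borel_sets (B j)) ->
     fine (P (\bigcap_(j in [set` J]) (n j @^-1` B j))) =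
     (\prod_(j <- J) fine (P (n j @^-1` B j)))%R) /\
  (forall (s t : int) (B : set V), borel_sets B ->
     P (n s @^-1` B) = P (n t @^-1` B)).

End RandomVariables.

Definition gseq {R : realType} {Omega : Type} {X Y : normedModType R[i]}
  (F0 F1 : X -> Y) (n : int -> Omega -> X) (t : int) (w : Omega) : Y :=
  (F0 (n t w) + F1 (n (t - 1)%R w))%R.

From HB Require Import structures.
From mathcomp Require Import all_boot all_order all_algebra.
From mathcomp Require Import complex.
From mathcomp Require Import all_classical all_reals all_analysis.
From mathcomp Require Import ring lra.
Import Order.TTheory GRing.Theory Num.Theory.
Import numFieldNormedType.Exports.
Local Open Scope classical_set_scope.
Local Open Scope ring_scope.
Local Open Scope complex_scope.

(* Put h = z - 1.  By the Laurent expansion, h^2 R(1+h) has the asymptotic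
   expansion  sum_l T_{l-2} h^l  as h -> 0 (a convergent power series gives
   an expansion of every finite order with an O(|h|^n) remainder, and such
   expansions have unique coefficients).  Comparing coefficients in
   A(1+h) R(1+h) = I and R(1+h) A(1+h) = I, with A(1+h) = C_0 + C_1 h, yields
   C_0 T_{l-2} + C_1 T_{l-3} = [l = 2] and its left-handed analogue.  From
   these follow the identities T_{-1} C_1 T_0 = 0, T_0 C_0 T_0 = T_0, ...,
   which show that I - T_0 C_1 is invertible with an explicit inverse and
   that the operators V_s satisfy  A_0 V_0 = C_0 T_0  and
   A_0 V_{s+1} + A_1 V_s = 0.  Hence the right-hand side of the claimed
   formula solves the same recursion, with the same initial value, as x(t);
   since 0 lies in V_eps, A_0 = A(0) is invertible and the recursion
   determines x(t).  The range inclusion T_{-2}(Y) <= T_{-1}(Y) comes from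
   T_{-2} = T_{-1} C_1 T_{-2}, and the last claim is the formula seen through
   a functional vanishing on T_{-2}(Y).  Only the Laurent expansion and the
   invertibility of A(z) on V_eps are used; neither analyticity on W_theta
   nor the probabilistic assumptions on the noise play a role. *)

Section RealNorm.
Context {R : realType}.
Local Notation C := R[i].

(* Norms of normed C-modules are complex numbers with zero imaginary part; nm
   is their real part, so that estimates can be done in the ordered field R. *)
Definition nm {V : normedModType C} (v : V) : R := complex.Re `|v|.

Definition nc (a : C) : R := nm (a : C^o).

Lemma nmE {V : normedModType C} (v : V) : `|v| = (nm v)%:C.
Proof. by rewrite /nm RRe_real // normr_real. Qed.

Lemma ncE (a : C) : `|a| = (nc a)%:C.
Proof. exact: (nmE (a : C^o)). Qed.

Lemma nm_ge0 {V : normedModType C} (v : V) : 0 <= nm v.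
Proof. by rewrite -ler0c -nmE. Qed.

Lemma nc_ge0 (a : C) : 0 <= nc a.
Proof. exact: (nm_ge0 (a : C^o)). Qed.

Lemma nm0 {V : normedModType C} : nm (0 : V) = 0.
Proof. by rewrite /nm normr0. Qed.

Lemma nm_eq0 {V : normedModType C} (v : V) : nm v = 0 -> v = 0.
Proof. by move=> v0; apply/eqP; rewrite -normr_eq0 nmE v0. Qed.

Lemma nmD {V : normedModType C} (u v : V) : nm (u + v) <= nm u + nm v.
Proof. by rewrite -lecR rmorphD /= -!nmE ler_normD. Qed.

Lemma nmN {V : normedModType C} (v : V) : nm (- v) = nm v.
Proof. by rewrite /nm normrN. Qed.

Lemma nmB {V : normedModType C} (u v : V) : nm (u - v) = nm (v - u).
Proof. by rewrite /nm distrC. Qed.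

Lemma nmZ {V : normedModType C} (a : C) (v : V) : nm (a *: v) = nc a * nm v.
Proof. by apply: complexI; rewrite rmorphM /= -ncE -!nmE normrZ. Qed.

Lemma nm_sum {V : normedModType C} I (r : seq I) (P : pred I) (F : I -> V) :
  nm (\sum_(i <- r | P i) F i) <= \sum_(i <- r | P i) nm (F i).
Proof.
elim/big_rec2: _ => [|i y1 y2 _ IH]; first by rewrite nm0.
by apply: le_trans (nmD _ _) _; rewrite lerD2l.
Qed.

Lemma ncX (h : C) k : nc (h ^+ k) = nc h ^+ k.
Proof. by apply: complexI; rewrite rmorphXn /= -!ncE normrX. Qed.

Lemma ncR (r : R) : nc r%:C = `|r|.
Proof. by apply: complexI; rewrite -ncE normc_def /= expr0n /= addr0 sqrtr_sqr. Qed.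

Lemma nc_neq0 {h : C} : 0 < nc h -> h != 0.
Proof. by apply: contraTneq => ->; rewrite /nc /nm normr0 ltxx. Qed.

Lemma leC_Re {x y : C} : x <= y -> complex.Re x <= complex.Re y.
Proof. by rewrite lecE => /andP[]. Qed.

End RealNorm.

Section RealFacts.
Context {R : realFieldType}.

Lemma eq0_of_small_bound (a K d : R) : 0 < d -> 0 <= a ->
  (forall r, 0 < r -> r < d -> a <= K * r) -> a = 0.
Proof.
move=> d0 a0 small; apply/eqP; rewrite eq_le a0 andbT.
apply/ler_addgt0Pr => e e0; rewrite add0r.
pose r := Order.min (d / 2) (e / (`|K| + 1)).
have K1 : 0 < `|K| + 1 by rewrite ltr_pwDr.
have r0 : 0 < r by rewrite lt_min divr_gt0 //= divr_gt0.
have rd : r < d by rewrite gt_min; apply/orP; left; lra.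
have re : r * (`|K| + 1) <= e.
  by rewrite -ler_pdivlMr // ge_min lexx orbT.
apply: le_trans (small r r0 rd) _; apply: le_trans re.
rewrite mulrDr mulr1 mulrC; apply: (le_trans (ler_norm _)).
by rewrite normrM (gtr0_norm r0) lerDl ltW.
Qed.

Lemma geom_sum_le2 {q : R} N : 0 <= q -> q <= 1 / 2 -> \sum_(i < N) q ^+ i <= 2.
Proof.
move=> q0 q1.
suff : \sum_(i < N) q ^+ i + 2 * q ^+ N <= 2 by have := exprn_ge0 N q0; lra.
elim: N => [|N IH]; first by rewrite big_ord0 expr0; lra.
rewrite big_ord_recr /= exprSr; have := exprn_ge0 N q0; nra.
Qed.

Lemma term_le_sum {N : nat} {F : nat -> R} {l} : (forall i, 0 <= F i) -> (l < N)%N ->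
  F l <= \sum_(i < N) F i.
Proof.
move=> F0 lN; rewrite (bigD1 (Ordinal lN)) //= -[X in X <= _]addr0.
by apply: lerD => //; apply: sumr_ge0.
Qed.

End RealFacts.

Section LinearOperators.
Context {R : realType}.
Local Notation C := R[i].

Section Linear.
Context {U V : normedModType C} {f : U -> V} (hf : is_linear_op f).

Lemma lin0 : f 0 = 0.
Proof.
have := hf 1 0 0; rewrite !scale1r !addr0 => f00.
by apply: (addrI (f 0)); rewrite -f00 addr0.
Qed.

Lemma linD u v : f (u + v) = f u + f v.
Proof. by have := hf 1 u v; rewrite !scale1r. Qed.

Lemma linZ a u : f (a *: u) = a *: f u.
Proof. by have := hf a u 0; rewrite !addr0 lin0 addr0. Qed.

Lemma linN u : f (- u) = - f u.
Proof. by rewrite -scaleN1r linZ scaleN1r. Qed.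

Lemma linB u v : f (u - v) = f u - f v.
Proof. by rewrite linD linN. Qed.

Lemma lin_sum I (r : seq I) (P : pred I) (F : I -> U) :
  f (\sum_(i <- r | P i) F i) = \sum_(i <- r | P i) f (F i).
Proof. exact: (big_morph f linD lin0). Qed.

End Linear.

Lemma bounded_opP {U V : normedModType C} {f : U -> V} : bounded_op f ->
  exists M : R, 0 <= M /\ forall u, nm (f u) <= M * nm u.
Proof.
case=> _ [M HM]; exists `|complex.Re M|; split => // u.
have Re_mulR (m : C) (r : R) : complex.Re (m * r%:C) = complex.Re m * r.
  by case: m => a b; rewrite /= mulr0 subr0.
have := leC_Re (HM u); rewrite [`|u|]nmE Re_mulR.
by move/le_trans; apply; apply: ler_wpM2r; [exact: nm_ge0 | exact: ler_norm].
Qed.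

Lemma bounded_opW {U V : normedModType C} (f : U -> V) : is_linear_op f ->
  (exists M : R, forall u, nm (f u) <= M * nm u) -> bounded_op f.
Proof.
move=> hl [M HM]; split => //; exists M%:C => u.
by rewrite !nmE -rmorphM lecR.
Qed.

Lemma bounded_comp {U V W : normedModType C} {f : V -> W} {g : U -> V} :
  bounded_op f -> bounded_op g -> bounded_op (fun u => f (g u)).
Proof.
move=> bf bg; apply: bounded_opW.
  by move=> a u v; rewrite (linD bg.1) (linZ bg.1) (linD bf.1) (linZ bf.1).
have [Mf [Mf0 Hf]] := bounded_opP bf; have [Mg [Mg0 Hg]] := bounded_opP bg.
exists (Mf * Mg) => u; apply: le_trans (Hf _) _.
by rewrite -mulrA ler_wpM2l.
Qed.

Lemma bounded_add {U V : normedModType C} {f g : U -> V} :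
  bounded_op f -> bounded_op g -> bounded_op (fun u => f u + g u).
Proof.
move=> bf bg; apply: bounded_opW.
  move=> a u v; rewrite (linD bg.1) (linZ bg.1) (linD bf.1) (linZ bf.1).
  by rewrite scalerDr addrACA.
have [Mf [Mf0 Hf]] := bounded_opP bf; have [Mg [Mg0 Hg]] := bounded_opP bg.
exists (Mf + Mg) => u; apply: le_trans (nmD _ _) _.
by rewrite mulrDl lerD.
Qed.

Lemma bounded_opp {V : normedModType C} : bounded_op (fun v : V => - v).
Proof.
apply: bounded_opW; first by move=> a u v; rewrite opprD scalerN.
by exists 1 => u; rewrite nmN mul1r.
Qed.

Lemma op_cvg_pointwise {U V : normedModType C} {u : nat -> U -> V} {L : U -> V} :
  op_cvg u L -> forall v e, 0 < e -> exists N, forall m, (N <= m)%N ->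
    nm (u m v - L v) <= e.
Proof.
move=> H v e e0.
have nv1 : 0 < nm v + 1 by have := nm_ge0 v; lra.
have [N HN] := H (e / (nm v + 1))%:C ltac:(by rewrite ltcR divr_gt0).
exists N => m hm; have := leC_Re (HN m hm v).
rewrite [`|v|]nmE -rmorphM /= => /le_trans; apply.
by rewrite mulrAC ler_pdivrMr //; have := nm_ge0 v; nra.
Qed.

Lemma lim_eventually_const {V : normedModType C} (u : nat -> V) a b N0 :
  (forall e, 0 < e -> exists N, forall m, (N <= m)%N -> nm (u m - a) <= e) ->
  (forall m, (N0 <= m)%N -> u m = b) -> a = b.
Proof.
move=> H Hb; apply/eqP; rewrite -subr_eq0; apply/eqP; apply: nm_eq0.
apply/eqP; rewrite eq_le nm_ge0 andbT; apply/ler_addgt0Pr => e e0.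
have [N HN] := H e e0; have := HN (N + N0)%N (leq_addr _ _).
by rewrite Hb ?leq_addl // nmB add0r.
Qed.

End LinearOperators.

Section Expansions.
Context {R : realType}.
Local Notation C := R[i].

Definition expansion {V : normedModType C} (F : C -> V) (c : nat -> V) (n : nat) :=
  exists d K : R, 0 < d /\ forall h : C, 0 < nc h -> nc h < d ->
    nm (F h - \sum_(l < n) h ^+ l *: c l) <= K * nc h ^+ n.

Definition near0_eq {V : normedModType C} (F G : C -> V) :=
  exists d : R, 0 < d /\ forall h, 0 < nc h -> nc h < d -> F h = G h.

Section Algebra.
Context {V : normedModType C}.

Lemma expansion_ext {F G : C -> V} {c c' n} : expansion F c n -> near0_eq F G ->
  (forall l, (l < n)%N -> c l = c' l) -> expansion G c' n.
Proof.
move=> [d [K [d0 H]]] [d1 [d10 HFG]] hc.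
exists (Order.min d d1), K; split; first by rewrite lt_min d0 d10.
move=> h h0; rewrite lt_min => /andP[h1 h2].
rewrite -HFG // (eq_bigr (fun l : 'I_n => h ^+ l *: c l)); first exact: H.
by move=> l _; rewrite hc.
Qed.

Lemma expansion_add {F G : C -> V} {c c' n} : expansion F c n -> expansion G c' n ->
  expansion (fun h => F h + G h) (fun l => c l + c' l) n.
Proof.
move=> [d [K [d0 H]]] [d1 [K1 [d10 H1]]].
exists (Order.min d d1), (K + K1); split; first by rewrite lt_min d0 d10.
move=> h h0; rewrite lt_min => /andP[h1 h2].
have -> : F h + G h - \sum_(l < n) h ^+ l *: (c l + c' l) =
    (F h - \sum_(l < n) h ^+ l *: c l) + (G h - \sum_(l < n) h ^+ l *: c' l).
  under eq_bigr do rewrite scalerDr.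
  by rewrite big_split /= opprD addrACA.
by apply: le_trans (nmD _ _) _; rewrite mulrDl lerD ?H ?H1.
Qed.

Lemma expansion_shift {F : C -> V} {c n} : expansion F c n ->
  expansion (fun h => h *: F h) (fun l => if l is l'.+1 then c l' else 0) n.+1.
Proof.
move=> [d [K [d0 H]]]; exists d, K; split => // h h0 h1.
rewrite big_ord_recl /= scaler0 add0r.
have -> : \sum_(i < n) h ^+ (bump 0 i) *: c i = h *: \sum_(l < n) h ^+ l *: c l.
  by rewrite scaler_sumr; apply: eq_bigr => l _; rewrite scalerA -exprS.
rewrite -scalerBr nmZ exprS mulrCA ler_wpM2l ?nc_ge0 //; exact: H.
Qed.

Lemma expansion_const (v : V) n :
  expansion (fun _ => v) (fun l => if l == 0%N then v else 0) n.
Proof.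
case: n => [|n].
  by exists 1, (nm v); split => // h _ _; rewrite big_ord0 subr0 expr0 mulr1.
exists 1, 0; split => // h _ _; rewrite big_ord_recl /= expr0 scale1r big1.
  by rewrite addr0 subrr nm0 mul0r.
by move=> i _; rewrite scaler0.
Qed.

Lemma expansion_trunc {F : C -> V} {c n} : expansion F c n.+1 -> expansion F c n.
Proof.
move=> [d [K [d0 H]]]; exists (Order.min d 1), (`|K| + nm (c n)); split.
  by rewrite lt_min d0 ltr01.
move=> h h0; rewrite lt_min => /andP[h1 h2].
have := H h h0 h1; rewrite big_ord_recr /=.
set S := \sum_(_ < n) _ => HS.
have -> : F h - S = (F h - (S + h ^+ n *: c n)) + h ^+ n *: c n.
  by rewrite opprD addrA subrK.
apply: le_trans (nmD _ _) _; rewrite nmZ ncX.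
have p0 : 0 <= nc h ^+ n by rewrite exprn_ge0 ?nc_ge0.
have q0 := nc_ge0 h; have c0 := nm_ge0 (c n).
have hK : K * nc h ^+ n.+1 <= `|K| * nc h ^+ n.
  rewrite exprSr mulrA; have := ler_norm K.
  have : K * nc h ^+ n <= `|K| * nc h ^+ n by rewrite ler_wpM2r // ler_norm.
  have : 0 <= `|K| * nc h ^+ n by rewrite mulr_ge0.
  nra.
nra.
Qed.

Lemma expansion_trunc_le {F : C -> V} {c m n} :
  (m <= n)%N -> expansion F c n -> expansion F c m.
Proof.
move=> /subnK <-; elim: (n - m)%N => [|k IH] //= h.
exact/IH/expansion_trunc.
Qed.

Lemma expansion_eq0 {F : C -> V} {c n} : expansion F c n -> near0_eq F (fun=> 0) ->
  forall l, (l < n)%N -> c l = 0.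
Proof.
move=> hF [d0 [d00 F0]] l; elim/ltn_ind: l => l IH ln.
have [d [K [dp H]]] := expansion_trunc_le ln hF.
apply: nm_eq0; apply: (@eq0_of_small_bound _ _ K (Order.min d d0)).
- by rewrite lt_min dp d00.
- exact: nm_ge0.
move=> r r0; rewrite lt_min => /andP[r1 r2].
have ncr : nc r%:C = r by rewrite ncR ger0_norm // ltW.
have := H r%:C; rewrite ncr => /(_ r0 r1).
rewrite F0 ?ncr // big_ord_recr /= big1 ?add0r; last first.
  by move=> i _; rewrite IH ?scaler0 // (ltn_trans (ltn_ord i) ln).
rewrite nmN nmZ ncX ncr exprSr mulrA [K * _]mulrC -mulrA.
by rewrite ler_pM2l // exprn_gt0.
Qed.

End Algebra.

Lemma expansion_lin {V W : normedModType C} {f : V -> W} {F c n} :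
  bounded_op f -> expansion F c n ->
  expansion (fun h => f (F h)) (fun l => f (c l)) n.
Proof.
move=> bf [d [K [d0 H]]]; have [M [M0 HM]] := bounded_opP bf.
exists d, (M * K); split => // h h0 h1.
have -> : f (F h) - \sum_(l < n) h ^+ l *: f (c l) =
    f (F h - \sum_(l < n) h ^+ l *: c l).
  rewrite (linB bf.1) (lin_sum bf.1); congr (_ - _).
  by apply: eq_bigr => l _; rewrite (linZ bf.1).
apply: le_trans (HM _) _; rewrite -mulrA ler_wpM2l //; exact: H.
Qed.

Lemma expansion_unique {V : normedModType C} {F G : C -> V} {c c' n} :
  expansion F c n -> expansion G c' n -> near0_eq F G ->
  forall l, (l < n)%N -> c l = c' l.
Proof.
move=> hF hG [d0 [d00 FG]] l ln; apply/eqP; rewrite -subr_eq0; apply/eqP.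
have hFG := expansion_add hF (expansion_lin bounded_opp hG).
apply: (expansion_eq0 hFG) => //.
by exists d0; split => // h h0 h1; rewrite FG // subrr.
Qed.

End Expansions.

Section PowerSeries.
Context {R : realType}.
Local Notation C := R[i].
Context {V : normedModType C} {t : nat -> V}.

Let psum (h : C) (m : nat) : V := \sum_(l < m) h ^+ l *: t l.

Lemma series_terms_bounded {r : R} (L : V) : 0 < r ->
  (exists N0, forall m, (N0 <= m)%N -> nm (psum r%:C m - L) <= 1) ->
  exists M, 0 <= M /\ forall l, r ^+ l * nm (t l) <= M.
Proof.
move=> r0 [N0 HN0].
have ncr : nc r%:C = r by rewrite ncR ger0_norm // ltW.
have term0 i : 0 <= r ^+ i * nm (t i) by rewrite mulr_ge0 ?exprn_ge0 ?nm_ge0 ?ltW.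
pose S := \sum_(l < N0) r ^+ l * nm (t l).
have S0 : 0 <= S by apply: sumr_ge0.
exists (2 + S); split; first lra.
move=> l; case: (ltnP l N0) => hl.
  by have := term_le_sum term0 hl; rewrite -/S; lra.
have -> : r ^+ l * nm (t l) = nm ((psum r%:C l.+1 - L) - (psum r%:C l - L)).
  by rewrite opprB addrA subrK /psum big_ord_recr /= addrC addKr nmZ ncX ncr.
apply: le_trans (nmD _ _) _; rewrite nmN.
have := HN0 l hl; have := HN0 l.+1 (leqW hl); lra.
Qed.

Lemma series_block_bound (r M : R) (h : C) k N : 0 < r -> 0 <= M ->
  (forall l, r ^+ l * nm (t l) <= M) -> nc h <= r / 2 ->
  nm (\sum_(i < N) h ^+ (k + i) *: t (k + i)) <= 2 * M / r ^+ k * nc h ^+ k.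
Proof.
move=> r0 M0 HM hr.
pose q := nc h / r.
have q0 : 0 <= q by rewrite divr_ge0 ?nc_ge0 ?ltW.
have q1 : q <= 1 / 2 by rewrite ler_pdivrMr //; lra.
have hq : nc h = q * r by rewrite divfK ?gt_eqF.
apply: le_trans (nm_sum _ _ _ _) _.
apply: (@le_trans _ _ (\sum_(i < N) M * q ^+ k * q ^+ i)).
  apply: ler_sum => i _; rewrite nmZ ncX hq exprMn -mulrA -exprD.
  by rewrite -mulrA mulrC ler_wpM2r ?exprn_ge0.
rewrite -mulr_sumr.
apply: le_trans (ler_wpM2l _ (geom_sum_le2 N q0 q1)) _.
  by rewrite mulr_ge0 ?exprn_ge0.
suff -> : 2 * M / r ^+ k * nc h ^+ k = M * q ^+ k * 2 by [].
by rewrite hq exprMn; field; rewrite expf_neq0 ?gt_eqF.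
Qed.

Lemma series_expansion {G : C -> V} {eps : R} : 0 < eps ->
  (forall h, 0 < nc h -> nc h < eps -> forall e, 0 < e ->
     exists N, forall m, (N <= m)%N -> nm (psum h m - G h) <= e) ->
  forall k, expansion G t k.
Proof.
move=> eps0 HG k.
pose r := eps / 2.
have r0 : 0 < r by rewrite /r; lra.
have ncr : nc r%:C = r by rewrite ncR ger0_norm // ltW.
have [M [M0 HM]] : exists M, 0 <= M /\ forall l, r ^+ l * nm (t l) <= M.
  apply: (series_terms_bounded (G r%:C) r0).
  by apply: HG; rewrite ?ncr //= /r; lra.
exists (r / 2), (2 * M / r ^+ k); split; first lra.
move=> h h0 h1; apply/ler_addgt0Pr => e ep.
have [N HN] := HG h h0 ltac:(rewrite /r in h1; lra) e ep.
have := HN (k + N)%N (leq_addl _ _); rewrite /psum big_split_ord /=.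
set Sk := \sum_(l < k) _; set Rest := \sum_(i < N) _ => HkN.
have HR : nm Rest <= 2 * M / r ^+ k * nc h ^+ k.
  by apply: series_block_bound => //; lra.
have -> : G h - Sk = - (Sk + Rest - G h) + Rest.
  by rewrite opprB opprD addrA addrNK.
apply: le_trans (nmD _ _) _; rewrite nmN; lra.
Qed.

End PowerSeries.

Section Nabla.
Context {R : realType}.
Local Notation C := R[i].
Context {V : normedModType C} (g : int -> V).

Lemma intS1 (t : nat) : (t.+1%:Z - 1 = t%:Z)%R.
Proof. by rewrite intS addrC addKr. Qed.

Lemma intSS (t s : nat) : (t.+1%:Z - s.+1%:Z = t%:Z - s%:Z)%R.
Proof. by rewrite !intS opprD addrACA subrr add0r. Qed.

Lemma nabla1E t : nabla_inv 1 g t = \sum_(s < t.+1) g (t%:Z - s%:Z).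
Proof. by apply: eq_bigr => s _; rewrite addnK binn scale1r. Qed.

Lemma nabla2E t :
  nabla_inv 2 g t = \sum_(s < t.+1) (s.+1)%:R *: g (t%:Z - s%:Z).
Proof. by apply: eq_bigr => s _; rewrite addn2 subn1 /= binSn. Qed.

Lemma nabla1S t : nabla_inv 1 g t.+1 = nabla_inv 1 g t + g t.+1%:Z.
Proof.
rewrite !nabla1E big_ord_recl /= subr0 addrC; congr (_ + _).
by apply: eq_bigr => i _; rewrite /bump /= add1n intSS.
Qed.

Lemma nabla2S t : nabla_inv 2 g t.+1 = nabla_inv 2 g t + nabla_inv 1 g t.+1.
Proof.
rewrite nabla1S !nabla2E nabla1E big_ord_recl /= subr0 scale1r.
rewrite addrA [RHS]addrC; congr (_ + _).
rewrite -big_split /=; apply: eq_bigr => i _.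
by rewrite /bump /= add1n intSS mulrSr scalerDl scale1r.
Qed.

End Nabla.

Section Resolvent.
Context {R : realType}.
Local Notation C := R[i].
Context {X Y : normedModType C} {A0 A1 : X -> Y} {RA : C -> Y -> X}
  {T : int -> Y -> X} {eps theta : R}.
Hypothesis bA0 : bounded_op A0.
Hypothesis bA1 : bounded_op A1.
Hypothesis eps0 : 0 < eps.
Hypothesis hRA : forall z, VW eps theta z ->
  bounded_op (RA z) /\ (forall u, RA z (A0 u + z *: A1 u) = u) /\
  (forall y, A0 (RA z y) + z *: A1 (RA z y) = y).
Hypothesis bT : forall j, bounded_op (T j).
Hypothesis hL : laurent_at1 T RA eps.
Hypothesis hpole : forall k : nat, (3 <= k)%N -> forall y, T (- k%:Z) y = 0.

Local Notation linT j := (bT j).1.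
Local Notation linA0 := bA0.1.
Local Notation linA1 := bA1.1.
Local Notation C0 u := (A0 u + A1 u).

Lemma VW_near1 {h : C} : 0 < nc h -> nc h < eps -> VW eps theta (1 + h).
Proof.
move=> h0 h1; left; split.
  apply: le_lt_trans (ler_normD _ _) _.
  by rewrite normr1 ncE rmorphD rmorph1 ltrD2l ltcR.
by rewrite -subr_eq0 addrC addKr nc_neq0.
Qed.

Lemma VW_0 : VW eps theta 0.
Proof.
left; split; last by rewrite eq_sym oner_eq0.
by rewrite normr0 (ltcR 0) addr_gt0 ?ltr01.
Qed.

Lemma A0_inverse : bounded_op (RA 0) /\ (forall u, RA 0 (A0 u) = u) /\
  (forall y, A0 (RA 0 y) = y).
Proof.
have [b [RA0 A0R]] := hRA _ VW_0; split => //; split => [u|y].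
  by have := RA0 u; rewrite scale0r addr0.
by have := A0R y; rewrite scale0r addr0.
Qed.

(* the singular part of the Laurent series at z = 1 + h; it has two terms
   since the pole has order two *)
Definition sing_part (y : Y) (h : C) : X :=
  \sum_(k < 2) (h ^+ k.+1)^-1 *: T (- (k.+1)%:Z) y.

Definition reg_part (y : Y) (h : C) : X := RA (1 + h) y - sing_part y h.

Lemma reg_part_series y h : 0 < nc h -> nc h < eps -> forall e, 0 < e ->
  exists N, forall m, (N <= m)%N ->
    nm (\sum_(l < m) h ^+ l *: T l%:Z y - reg_part y h) <= e.
Proof.
move=> h0 h1.
have zh : 1 + h - 1 = h by rewrite addrC addKr.
have [Sg [Rg [HS [HR HF]]]] := hL (1 + h) ltac:(by rewrite zh ncE (ltcR 0) ltcR h0 h1).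
rewrite zh in HS HR.
have ES : Sg y = sing_part y h.
  apply: (@lim_eventually_const _ _
    (fun m => \sum_(k < m) h ^- k.+1 *: T (- (k.+1)%:Z) y) _ _ 2).
    by move=> e e0; have [N HN] := op_cvg_pointwise HS y e e0; exists N.
  move=> m hm; rewrite -(subnK hm) addnC big_split_ord /= [X in _ + X]big1 ?addr0 //.
  by move=> i _; rewrite hpole ?scaler0.
have -> : reg_part y h = Rg y by rewrite /reg_part HF -ES addrC addKr.
exact: op_cvg_pointwise HR y.
Qed.

Definition scaled_resolvent (y : Y) (h : C) : X := h ^+ 2 *: RA (1 + h) y.

(* h^2 R(1 + h) = sum_{l < 5} T_{l-2} h^l + O(|h|^5), by adding the two-term
   singular part to the expansion of the regular part *)
Lemma scaled_resolvent_expansion y :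
  expansion (scaled_resolvent y) (fun l => T (l%:Z - 2) y) 5.
Proof.
have Ereg := series_expansion (t := fun l => T l%:Z y) eps0 (reg_part_series y) 3.
have E1 := expansion_add (expansion_const (T (- 1%:Z) y) 4) (expansion_shift Ereg).
have E2 := expansion_add (expansion_const (T (- 2%:Z) y) 5) (expansion_shift E1).
apply: (expansion_ext E2); last first.
  by case => [|[|[|[|[|l]]]]] //= _; rewrite ?addr0 ?add0r.
exists eps; split => // h h0 h1; have hn := nc_neq0 h0.
rewrite /scaled_resolvent -(subrK (sing_part y h) (RA (1 + h) y)) -/(reg_part y h).
rewrite /sing_part !big_ord_recl big_ord0 addr0 !scalerDr !scalerA expr1.
rewrite [h ^+ 2 * (h ^+ 2)^-1]divff ?expf_neq0 // expr2 mulfK // scale1r -expr2.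
by rewrite addrA addrC; congr (_ + _); exact: addrC.
Qed.

(* Coefficients of h^0, ..., h^4 in  (C_0 + h C_1) h^2 R(1+h) = h^2 I. *)
Lemma right_coef_identities y :
 [/\ C0 (T (-2) y) = 0,
     C0 (T (-1) y) + A1 (T (-2) y) = 0,
     C0 (T 0 y) + A1 (T (-1) y) = y,
     C0 (T 1 y) + A1 (T 0 y) = 0 &
     C0 (T 2 y) + A1 (T 1 y) = 0].
Proof.
have ES := scaled_resolvent_expansion y.
have E := expansion_add (expansion_add (expansion_lin bA0 ES) (expansion_lin bA1 ES))
  (expansion_trunc (expansion_shift (expansion_lin bA1 ES))).
have Eh2 := expansion_shift (expansion_shift (expansion_const y 3)).
have coef := expansion_unique E Eh2.
have eq_near0 : near0_eq (fun h => C0 (scaled_resolvent y h) + h *: A1 (scaled_resolvent y h))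
                         (fun h => h *: (h *: y)).
  exists eps; split => // h h0 h1.
  have [_ [_ A_R]] := hRA _ (VW_near1 h0 h1).
  rewrite /scaled_resolvent !(linZ linA0) !(linZ linA1).
  have Dl (v : Y) : v + h *: v = (1 + h) *: v by rewrite scalerDl scale1r.
  have -> : h *: (h ^+ 2 *: A1 (RA (1 + h) y)) = h ^+ 2 *: (h *: A1 (RA (1 + h) y)).
    by rewrite !scalerA mulrC.
  by rewrite -!scalerDr -addrA Dl A_R scalerA expr2.
have := coef eq_near0 0%N erefl; have := coef eq_near0 1%N erefl.
have := coef eq_near0 2%N erefl; have := coef eq_near0 3%N erefl.
have := coef eq_near0 4%N erefl.
by rewrite /= ?addr0.
Qed.

(* Coefficients of h^0, ..., h^3 in  h^2 R(1+h) (C_0 + h C_1) = h^2 I. *)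
Lemma left_coef_identities u :
 [/\ T (-2) (C0 u) = 0,
     T (-1) (C0 u) + T (-2) (A1 u) = 0,
     T 0 (C0 u) + T (-1) (A1 u) = u &
     T 1 (C0 u) + T 0 (A1 u) = 0].
Proof.
have E := expansion_add (scaled_resolvent_expansion (C0 u))
  (expansion_trunc (expansion_shift (scaled_resolvent_expansion (A1 u)))).
have Eh2 := expansion_shift (expansion_shift (expansion_const u 3)).
have coef := expansion_unique E Eh2.
have eq_near0 : near0_eq
    (fun h => scaled_resolvent (C0 u) h + h *: scaled_resolvent (A1 u) h)
    (fun h => h *: (h *: u)).
  exists eps; split => // h h0 h1.
  have [bR [R_A _]] := hRA _ (VW_near1 h0 h1).
  have Dl (v : Y) : v + h *: v = (1 + h) *: v by rewrite scalerDl scale1r.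
  rewrite /scaled_resolvent.
  have -> : h *: (h ^+ 2 *: RA (1 + h) (A1 u)) = h ^+ 2 *: (h *: RA (1 + h) (A1 u)).
    by rewrite !scalerA mulrC.
  rewrite -scalerDr -(linZ bR.1) -(linD bR.1) -addrA Dl R_A.
  by rewrite scalerA expr2.
have := coef eq_near0 0%N erefl; have := coef eq_near0 1%N erefl.
have := coef eq_near0 2%N erefl; have := coef eq_near0 3%N erefl.
by rewrite /= ?addr0.
Qed.

(* T_{-2} C_1 T_1 = 0 and T_{-2} C_1 T_0 = 0: apply T_{-2} to the right
   identities for h^4 and h^3 and use T_{-2} C_0 = 0.  Below, identities are
   named after the operator products they concern (n1 stands for -1). *)
Lemma Tn2_C1_T1 v : T (-2) (A1 (T 1 v)) = 0.
Proof.
have [_ _ _ _ r4] := right_coef_identities v.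
have [l0 _ _ _] := left_coef_identities (T 2 v).
by have := congr1 (T (-2)) r4; rewrite (linD (linT _)) l0 add0r (lin0 (linT _)).
Qed.

Lemma Tn2_C1_T0 v : T (-2) (A1 (T 0 v)) = 0.
Proof.
have [_ _ _ r3 _] := right_coef_identities v.
have [l0 _ _ _] := left_coef_identities (T 1 v).
by have := congr1 (T (-2)) r3; rewrite (linD (linT _)) l0 add0r (lin0 (linT _)).
Qed.

Lemma Tn1_C1_T0 v : T (-1) (A1 (T 0 v)) = 0.
Proof.
have [_ _ _ r3 _] := right_coef_identities v.
have [_ l1 _ _] := left_coef_identities (T 1 v).
rewrite Tn2_C1_T1 addr0 in l1.
by have := congr1 (T (-1)) r3; rewrite (linD (linT _)) l1 add0r (lin0 (linT _)).
Qed.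

Lemma Tn1_C0_T0 v : T (-1) (C0 (T 0 v)) = 0.
Proof.
by have [_ l1 _ _] := left_coef_identities (T 0 v); rewrite Tn2_C1_T0 addr0 in l1.
Qed.

Lemma T0_C0_Tn1 v : T 0 (C0 (T (-1) v)) = 0.
Proof.
have [r0 r1 _ _ _] := right_coef_identities v.
have [_ _ _ l3] := left_coef_identities (T (-2) v).
rewrite r0 (lin0 (linT _)) add0r in l3.
by have := congr1 (T 0) r1; rewrite (linD (linT _)) l3 addr0 (lin0 (linT _)).
Qed.

Lemma T0_C0_T0 v : T 0 (C0 (T 0 v)) = T 0 v.
Proof.
by have [_ _ l2 _] := left_coef_identities (T 0 v); rewrite Tn1_C1_T0 addr0 in l2.
Qed.

Lemma T0_C1_Tn1 v : T 0 (A1 (T (-1) v)) = 0.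
Proof.
have [_ _ r2 _ _] := right_coef_identities v.
have := congr1 (T 0) r2; rewrite (linD (linT _)) T0_C0_T0.
by rewrite -[in RHS](addr0 (T 0 v)) => /addrI.
Qed.

Lemma T0_A0_Tn1 v : T 0 (A0 (T (-1) v)) = 0.
Proof. by have := T0_C0_Tn1 v; rewrite (linD (linT _)) T0_C1_Tn1 addr0. Qed.

Lemma Tn1_C1_Tn1 v : T (-1) (A1 (T (-1) v)) = T (-1) v.
Proof.
have [_ _ r2 _ _] := right_coef_identities v.
by have := congr1 (T (-1)) r2; rewrite (linD (linT _)) Tn1_C0_T0 add0r.
Qed.

(* T_{-2} = T_{-1} C_1 T_{-2}; in particular T_{-2}(Y) is contained in T_{-1}(Y) *)
Lemma Tn2_factor y : T (-2) y = T (-1) (A1 (T (-2) y)).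
Proof.
have [_ _ l2 _] := left_coef_identities (T (-2) y).
have [r0 _ _ _ _] := right_coef_identities y.
by rewrite r0 (lin0 (linT _)) add0r in l2.
Qed.

(* C_1 T_{-1} A_0 = A_0 T_{-1} C_1, since C_0 T_{-1} C_1 and C_1 T_{-1} C_0 both
   equal - C_1 T_{-2} C_1 *)
Lemma A1_Tn1_A0 u : A1 (T (-1) (A0 u)) = A0 (T (-1) (A1 u)).
Proof.
have [_ r1 _ _ _] := right_coef_identities (A1 u).
have [_ l1 _ _] := left_coef_identities u.
have := addr0_eq r1; rewrite -(addr0_eq l1) (linN linA1) => /oppr_inj.
by rewrite !(linD (linT _)) !(linD linA1) => /addIr.
Qed.

Lemma A1_T0_A0 u : A1 (T 0 (A0 u)) = A0 (T 0 (A1 u)).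
Proof.
have [_ _ r2 _ _] := right_coef_identities (A1 u).
have [_ _ l2 _] := left_coef_identities u.
have := congr1 A1 l2; rewrite (linD linA1) -{3}r2 => /addIr.
by rewrite !(linD (linT _)) !(linD linA1) => /addIr.
Qed.

Lemma Tn1_A1_R0 w : T (-1) (A1 (RA 0 w)) = RA 0 (A1 (T (-1) w)).
Proof.
have [_ [R0A A0R]] := A0_inverse.
by rewrite -{2}(A0R w) A1_Tn1_A0 R0A.
Qed.

Definition Bop (u : X) : X := u - T 0 (A1 u).

Definition Bop_inv (w : X) : X := T (-1) (A1 w) + RA 0 (C0 (T 0 (C0 w))).

(* I - T_0 C_1 = T_{-1} C_1 + T_0 A_0, by the left identity T_0 C_0 + T_{-1} C_1 = I *)
Lemma BopE u : Bop u = T (-1) (A1 u) + T 0 (A0 u).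
Proof.
have [_ _ l2 _] := left_coef_identities u.
by rewrite /Bop -{1}l2 (linD (linT _)) addrAC addrK addrC.
Qed.

Lemma C0D u v : C0 (u + v) = C0 u + C0 v.
Proof. by rewrite (linD linA0) (linD linA1) addrACA. Qed.

Lemma Bop_invK w : Bop (Bop_inv w) = w.
Proof.
have [bR0 [_ A0R]] := A0_inverse.
have [_ _ l2 _] := left_coef_identities w.
rewrite BopE /Bop_inv (linD linA1) (linD (linT _)) Tn1_C1_Tn1 Tn1_A1_R0 Tn1_C0_T0.
rewrite (lin0 linA1) (lin0 bR0.1) addr0 (linD linA0) A0R (linD (linT _)).
by rewrite T0_A0_Tn1 T0_C0_T0 add0r addrC; exact: l2.
Qed.

Lemma BopK u : Bop_inv (Bop u) = u.
Proof.
have [_ [R0A _]] := A0_inverse.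
have [_ _ l2 _] := left_coef_identities u.
rewrite BopE /Bop_inv [X in T (-1) X](linD linA1) (linD (linT _)) Tn1_C1_Tn1.
rewrite Tn1_C1_T0 addr0 C0D (linD (linT _)) T0_C0_Tn1 add0r T0_C0_T0.
have -> : C0 (T 0 (A0 u)) = A0 (T 0 (C0 u)).
  by rewrite A1_T0_A0 (linD (linT _)) (linD linA0).
by rewrite R0A addrC; exact: l2.
Qed.

Lemma Bop_inv_bounded : bounded_op Bop_inv.
Proof.
have [bR0 _] := A0_inverse.
have bC0 : bounded_op (fun u => C0 u) := bounded_add bA0 bA1.
apply: bounded_add; first exact: bounded_comp (bT (-1)) bA1.
exact: bounded_comp bR0 (bounded_comp bC0 (bounded_comp (bT 0) bC0)).
Qed.

Lemma op_inv_Bop w : op_inv Bop w = Bop_inv w.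
Proof.
have Binv : exists g : X -> X, bounded_op g /\ cancel Bop g /\ cancel g Bop.
  by exists Bop_inv; split; [exact: Bop_inv_bounded | split; [exact: BopK | exact: Bop_invK]].
rewrite /op_inv; case: pselect => [H|]; last by move/(_ Binv).
case: (cid H) => g [_ [gK _]] /=.
by rewrite -{1}(Bop_invK w) gK.
Qed.

(* K = T_0 C_1 commutes with I - T_0 C_1, hence with its inverse *)
Definition Kop (u : X) : X := T 0 (A1 u).

Lemma Bop_inv_Kop u : op_inv Bop (Kop u) = Kop (op_inv Bop u).
Proof.
rewrite !op_inv_Bop -{1}(Bop_invK u).
have -> : Kop (Bop (Bop_inv u)) = Bop (Kop (Bop_inv u)).
  by rewrite /Bop /Kop (linB linA1) (linB (linT _)).
exact: BopK.
Qed.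

Lemma iter_Bop_inv_Kop n u :
  iter n (op_inv Bop) (Kop u) = Kop (iter n (op_inv Bop) u).
Proof. by elim: n => [|n IH] //=; rewrite IH Bop_inv_Kop. Qed.

(* T_{-1} C_1 is unchanged by (I - T_0 C_1)^{-1}, since T_{-1} C_1 T_0 = 0 *)
Lemma Tn1_A1_iter_Bop_inv n u :
  T (-1) (A1 (iter n (op_inv Bop) u)) = T (-1) (A1 u).
Proof.
elim: n => [|n IH] //=; rewrite -IH op_inv_Bop.
set v := iter n _ u.
by rewrite -{2}(Bop_invK v) /Bop (linB linA1) (linB (linT _)) Tn1_C1_T0 subr0.
Qed.

Lemma VopE s y : Vop T A1 s y =
  (-1) ^+ s *: iter s.+1 (op_inv Bop) (iter s Kop (T 0 y)).
Proof. by []. Qed.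

Lemma A0_Vop0 y : A0 (Vop T A1 0 y) = C0 (T 0 y).
Proof.
have [_ [_ A0R]] := A0_inverse.
by rewrite VopE expr0 scale1r /= op_inv_Bop /Bop_inv Tn1_C1_T0 T0_C0_T0 add0r A0R.
Qed.

Lemma A0_Vop_succ s y : A0 (Vop T A1 s.+1 y) + A1 (Vop T A1 s y) = 0.
Proof.
have [_ [_ A0R]] := A0_inverse.
set u := iter s.+1 (op_inv Bop) (iter s Kop (T 0 y)).
have Tn1_A1_u : T (-1) (A1 u) = 0.
  rewrite /u Tn1_A1_iter_Bop_inv; case: s {u} => [|s] /=; exact: Tn1_C1_T0.
have A0_step : A0 (op_inv Bop (Kop u)) = A1 u.
  have [_ _ r2 _ _] := right_coef_identities (A1 u).
  rewrite Tn1_A1_u (lin0 linA1) addr0 in r2.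
  by rewrite op_inv_Bop /Bop_inv /Kop Tn1_C1_T0 T0_C0_T0 add0r A0R; exact: r2.
rewrite !VopE.
have -> : iter s.+2 (op_inv Bop) (iter s.+1 Kop (T 0 y)) = op_inv Bop (Kop u).
  by rewrite /u /= iter_Bop_inv_Kop Bop_inv_Kop.
rewrite (linZ linA0) (linZ linA1) A0_step -/u.
by rewrite exprS mulN1r scaleNr addNr.
Qed.

(* C_0 T_{-1} = A_0 T_{-2}: both equal - C_1 T_{-2} *)
Lemma C0_Tn1 v : C0 (T (-1) v) = A0 (T (-2) v).
Proof.
have [r0 r1 _ _ _] := right_coef_identities v.
by apply: (addIr (A1 (T (-2) v))); rewrite r1 r0.
Qed.

Lemma recursion_determines {a a' b : X} {g : Y} :
  A0 a + A1 b = g -> A0 a' + A1 b = g -> a = a'.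
Proof.
have [_ [R0A _]] := A0_inverse.
by move=> <- /addIr E; rewrite -(R0A a) -E R0A.
Qed.

Definition candidate (n2 n1 : Y) (w : X) (d : Y) : X :=
  T (-2) n2 - T (-1) n1 + T (-2) d + w.

(* If n2, n1 and w are updated the way nabla^{-2} g_+, nabla^{-1} g_+ and
   sum_s V_s g(t - s) are, the candidate satisfies A_0 x(t) + A_1 x(t-1) = g(t). *)
Lemma candidate_step n2 n1 w w' g d : A0 w' + A1 w = C0 (T 0 g) ->
  A0 (candidate (n2 + (n1 + g)) (n1 + g) w' d) + A1 (candidate n2 n1 w d) = g.
Proof.
move=> Ew.
have [Td _ _ _ _] := right_coef_identities d.
have [Tn2 _ _ _ _] := right_coef_identities n2.
have [_ _ Tg _ _] := right_coef_identities g.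
have regroup (a1 a2 a3 a4 b1 b2 b3 b4 : Y) :
    a1 - a2 + a3 + a4 + (b1 - b2 + b3 + b4) = (a1 + b1) - (a2 + b2) + (a3 + b3) + (a4 + b4).
  by rewrite addrACA (addrACA (a1 - a2)) (addrACA a1) opprD.
have E2 : A0 (T (-2) (n2 + (n1 + g))) + A1 (T (-2) n2) = A0 (T (-2) (n1 + g)).
  by rewrite (linD (linT _)) (linD linA0) addrAC Tn2 add0r.
have E1 : A0 (T (-1) (n1 + g)) + A1 (T (-1) n1) = A0 (T (-2) (n1 + g)) - A1 (T (-1) g).
  by rewrite -C0_Tn1 [in A1 (T (-1) (n1 + g))](linD (linT _)) (linD linA1) addrA addrK.
rewrite /candidate !(linD linA0) !(linN linA0) !(linD linA1) !(linN linA1).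
by rewrite regroup Ew Td E2 E1 addr0 subKr addrC.
Qed.

Section VopSums.
Variable g : int -> Y.

Definition Vsum (t : nat) : X := \sum_(s < t.+1) Vop T A1 s (g (t%:Z - s%:Z)).

Lemma Vsum0 : A0 (Vsum 0) + A1 0 = C0 (T 0 (g 0)).
Proof. by rewrite /Vsum big_ord1 subr0 A0_Vop0 (lin0 linA1) addr0. Qed.

Lemma VsumS t : A0 (Vsum t.+1) + A1 (Vsum t) = C0 (T 0 (g t.+1%:Z)).
Proof.
rewrite /Vsum big_ord_recl /= subr0 (linD linA0) A0_Vop0.
rewrite (lin_sum linA0) (lin_sum linA1) -addrA -big_split /= big1 ?addr0 // => i _.
by rewrite /bump /= add1n intSS A0_Vop_succ.
Qed.

End VopSums.

Section SolutionFormula.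
Context {g : int -> Y} {x : int -> X} {d : Y}.
Hypothesis x_init : x (-1) = T (-2) d.
Hypothesis x_rec : forall t : nat, A0 (x t%:Z) + A1 (x (t%:Z - 1)) = g t%:Z.

Lemma solution_formula (t : nat) :
  x t%:Z = candidate (nabla_inv 2 g t) (nabla_inv 1 g t) (Vsum g t) d.
Proof.
elim: t => [|t IH].
  have x0 := x_rec 0%N; rewrite [(0%:Z - 1)%R]/= x_init in x0.
  apply: (recursion_determines x0).
  have -> : nabla_inv 2 g 0 = 0 + (0 + g 0).
    by rewrite !add0r /nabla_inv big_ord1 bin0 scale1r ?subr0.
  have -> : nabla_inv 1 g 0 = 0 + g 0.
    by rewrite add0r /nabla_inv big_ord1 bin0 scale1r ?subr0.
  have -> : T (-2) d = candidate 0 0 0 d.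
    by rewrite /candidate !(lin0 (linT _)) subrr add0r addr0.
  exact: candidate_step (Vsum0 g).
have xS := x_rec t.+1; rewrite intS1 IH in xS.
apply: (recursion_determines xS).
by rewrite nabla2S nabla1S; apply: candidate_step; exact: VsumS.
Qed.

(* the formula of the theorem; its term (t+1) T_{-2} C_0 T_{-2} d vanishes *)
Lemma solution_formula_expanded (t : nat) :
  x t%:Z = T (-2) (nabla_inv 2 g t) - T (-1) (nabla_inv 1 g t) + T (-2) d
           + t.+1%:R *: T (-2) (C0 (T (-2) d)) + Vsum g t.
Proof.
have [Td _ _ _ _] := right_coef_identities d.
by rewrite solution_formula Td (lin0 (linT _)) scaler0 addr0.
Qed.

Lemma solution_functional (f : X -> C^o) : bounded_op f ->
  (forall y, f (T (-2) y) = 0) -> forall t : nat,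
  f (x t%:Z) = - f (T (-1) (\sum_(s < t.+1) g (t%:Z - s%:Z)))
               + \sum_(s < t.+1) f (Vop T A1 s (g (t%:Z - s%:Z))).
Proof.
move=> bf f0 t; rewrite solution_formula /candidate /Vsum nabla1E.
rewrite !(linD bf.1) (linN bf.1) (lin_sum bf.1) !f0.
by rewrite add0r addr0.
Qed.

End SolutionFormula.

End Resolvent.

Theorem mainTheorem7 (R : realType) (X Y : completeNormedModType R[i])
  (A0 A1 : X -> Y) (RA : R[i] -> Y -> X) (T : int -> Y -> X) (eps theta : R)
  (dOm : measure_display) (Omega : measurableType dOm) (P : probability Omega R)
  (n : int -> Omega -> X) (F0 F1 : X -> Y) (x : int -> Omega -> X) (d : Y) :
  bounded_op A0 -> bounded_op A1 -> bounded_op F0 -> bounded_op F1 ->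
  0 < eps -> 0 < theta ->
  (* R(z) = A(z)^{-1} in B(Y,X) for z in V_eps \cup W_theta *)
  (forall z, VW eps theta z ->
     bounded_op (RA z) /\
     (forall u, RA z (A0 u + z *: A1 u) = u) /\
     (forall y, A0 (RA z y) + z *: A1 (RA z y) = y)) ->
  analytic_on (VW eps theta) RA ->
  (* Laurent coefficients T_j of R about z = 1 *)
  (forall j, bounded_op (T j)) -> laurent_at1 T RA eps ->
  (* pole of order 2 *)
  (exists y, T (-2)%R y != 0) ->
  (forall k : nat, (3 <= k)%N -> forall y, T (- k%:Z)%R y = 0) ->
  (* time series setup *)
  (forall t, bochner_measurable (n t)) ->
  (forall t, finite_second_moment P (n t)) ->
  (forall t, bochner_integral_is P (n t) 0) ->
  iid_seq P n ->
  (forall w, x (-1)%R w = T (-2)%R d) ->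
  (forall (t : nat) w, A0 (x t%:Z w) + A1 (x (t%:Z - 1)%R w) = gseq F0 F1 n t%:Z w) ->
  (forall (t : nat) w,
     x t%:Z w =
       T (-2)%R (nabla_inv 2 (fun s => gseq F0 F1 n s w) t)
       - T (-1)%R (nabla_inv 1 (fun s => gseq F0 F1 n s w) t)
       + T (-2)%R d
       + t.+1%:R *: T (-2)%R (A0 (T (-2)%R d) + A1 (T (-2)%R d))
       + \sum_(s < t.+1) Vop T A1 s (gseq F0 F1 n (t%:Z - s%:Z) w)) /\
  range (T (-2)%R) `<=` range (T (-1)%R) /\
  (forall f : X -> R[i]^o, bounded_op f -> (forall y, f (T (-2)%R y) = 0) ->
     forall (t : nat) w,
       f (x t%:Z w) =
         - f (T (-1)%R (\sum_(s < t.+1) gseq F0 F1 n (t%:Z - s%:Z) w))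
         + \sum_(s < t.+1) f (Vop T A1 s (gseq F0 F1 n (t%:Z - s%:Z) w))).
Proof.
move=> bA0 bA1 _ _ eps0 _ hRA _ bT hL _ hpole _ _ _ _ x_init x_rec.
(* Only the resolvent enters: for each outcome w the path t |-> x(t, w) solves
   the recursion driven by the input t |-> g(t, w). *)
split; [|split].
- move=> t w; exact: (solution_formula_expanded bA0 bA1 eps0 hRA bT hL hpole
    (g := fun s => gseq F0 F1 n s w) (x := fun s => x s w) (x_init w) (x_rec ^~ w)).
- move=> _ [y _ <-]; exists (A1 (T (-2) y)) => //.
  by rewrite -(Tn2_factor bA0 bA1 eps0 hRA bT hL hpole).
- move=> f bf f0 t w; exact: (solution_functional bA0 bA1 eps0 hRA bT hL hpole
    (g := fun s => gseq F0 F1 n s w) (x := fun s => x s w) (x_init w) (x_rec ^~ w)).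
Qed.
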